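(* Let $p\ge 3$ be a prime, $m,k\ge1$ integers, and $t,u\in\mathbb{Z}_p$ with $u\neq0$ and $t^2\equiv u\pmod p$. Let $G$ be the set of all $m\times k$ matrices over $\mathbb{Z}_p$ with the operation $[a_{ij}]*[b_{ij}]=[(t a_{ij}+u b_{ij})\bmod p]$. Then $(G,* )$ is a cancellative AG-groupoid.
   Context: An AG-groupoid is a set with a binary operation satisfying $(a*b)*c=(c*b)*a$ for all $a,b,c$. An element $a$ of an AG-groupoid $G$ is left cancellative if $a*x=a*y$ implies $x=y$, and right cancellative if $x*a=y*a$ implies $x=y$; $G$ is cancellative if every element is both left and right cancellative. *)

From mathcomp Require Import all_boot all_order all_algebra.
Set Implicit Arguments. Unset Strict Implicit. Unset Printing Implicit Defensive.
Import GRing.Theory.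
Local Open Scope ring_scope.

Definition AG_groupoid (T : Type) (op : T -> T -> T) : Prop :=
  forall a b c : T, op (op a b) c = op (op c b) a.

Definition left_cancellative (T : Type) (op : T -> T -> T) (a : T) : Prop :=
  forall x y : T, op a x = op a y -> x = y.

Definition right_cancellative (T : Type) (op : T -> T -> T) (a : T) : Prop :=
  forall x y : T, op x a = op y a -> x = y.

Definition cancellative (T : Type) (op : T -> T -> T) : Prop :=
  forall a : T, left_cancellative op a /\ right_cancellative op a.

Definition matop (p m k : nat) (t u : 'F_p) (A B : 'M['F_p]_(m, k)) : 'M['F_p]_(m, k) :=
  \matrix_(i < m, j < k) (t * A i j + u * B i j).

From mathcomp Require Import all_boot all_order all_algebra.
Local Open Scope ring_scope.
Import GRing.Theory.
Set Implicit Arguments. Unset Strict Implicit. Unset Printing Implicit Defensive.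

(* Entrywise, [matop] is the linear form [t a + u b].  Expanding both sides of the
   AG law gives [t^2 a + t u b + u c] and [t^2 c + t u b + u a], which agree exactly
   when [t^2 = u]; cancellation reduces to the injectivity of multiplication by the
   nonzero scalars [u] (on the left) and [t] (on the right), as [F_p] is a field. *)

Section LinearForm.

Variable R : comPzRingType.
Variables t u : R.

Definition linform (a b : R) : R := t * a + u * b.

Lemma linform_AG : t ^+ 2 = u -> AG_groupoid linform.
Proof.
move=> tu a b c; rewrite /linform !mulrDr !mulrA -expr2 tu [t * u]mulrC.
by rewrite addrAC [RHS]addrAC [u * c + _]addrC.
Qed.

Lemma linform_lcancel a : GRing.lreg u -> left_cancellative linform a.
Proof. by move=> u_reg x y /addrI /u_reg. Qed.

Lemma linform_rcancel a : GRing.lreg t -> right_cancellative linform a.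
Proof. by move=> t_reg x y /addIr /t_reg. Qed.

End LinearForm.

Section EntrywiseLift.

Variables (T : Type) (m k : nat) (op : T -> T -> T).

Definition mx_entrywise (A B : 'M[T]_(m, k)) : 'M[T]_(m, k) :=
  \matrix_(i, j) op (A i j) (B i j).

Lemma mx_entrywise_AG : AG_groupoid op -> AG_groupoid mx_entrywise.
Proof. by move=> opAG A B C; apply/matrixP => i j; rewrite !mxE opAG. Qed.

Lemma mx_entrywise_cancel : cancellative op -> cancellative mx_entrywise.
Proof.
move=> op_canc A; split=> X Y /matrixP XY; apply/matrixP => i j; have := XY i j;
  rewrite !mxE; [exact: (op_canc _).1 | exact: (op_canc _).2].
Qed.

End EntrywiseLift.

Lemma matopE (p m k : nat) (t u : 'F_p) :
  @matop p m k t u = mx_entrywise (linform t u).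
Proof. by []. Qed.

Theorem mainTheorem7 (p m k : nat) (t u : 'F_p) :
  prime p -> (3 <= p)%N -> (1 <= m)%N -> (1 <= k)%N ->
  u != 0 -> t ^+ 2 = u ->
  AG_groupoid (@matop p m k t u) /\ cancellative (@matop p m k t u).
Proof.
move=> _ _ _ _ u_neq0 tu.
have t_neq0 : t != 0 by apply: contraNneq u_neq0 => t0; rewrite -tu t0 expr0n.
rewrite matopE; split; first exact/mx_entrywise_AG/linform_AG.
apply: mx_entrywise_cancel => a; split.
- exact/linform_lcancel/mulfI.
- exact/linform_rcancel/mulfI.
Qed.
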